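(* Let $\Gamma_0<\Gamma$ be a finite index inclusion of countable groups and let $\sigma_n:\Gamma_0\rightarrow\mathrm{Sym}(X_n)$ be a sofic approximation of $\Gamma_0$. If the induced sofic approximation $\mathrm{Ind}_{\Gamma_0}^{\Gamma}(\sigma_n):\Gamma\to\mathrm{Sym}(\Gamma/\Gamma_0\times X_n)$ of $\Gamma$ satisfies property $(\diamond)$, then $(\sigma_n)$ satisfies property $(\diamond)$.
   Context: For finite sets $X,Y$ and maps $\alpha,\beta:X\to Y$, $\mathrm{d}_{\mathrm{H}}(\alpha,\beta)=|X|^{-1}|\{x\in X\mid\alpha(x)\neq\beta(x)\}|$. A sofic approximation of a countable group $G$ is a sequence of maps $\sigma_n:G\to\mathrm{Sym}(X_n)$, $X_n$ finite, with $\mathrm{d}_{\mathrm{H}}(\sigma_n(g)\sigma_n(h),\sigma_n(gh))\to0$ for all $g,h\in G$ and $\mathrm{d}_{\mathrm{H}}(\sigma_n(g),\mathrm{Id}_{X_n})\to1$ for all $g\neq e$. A sofic approximation $\sigma_n:G\to\mathrm{Sym}(X_n)$ satisfies $(\diamond)$ if there exist a sofic approximation $\tau_n:G\to\mathrm{Sym}(Y_n)$ and maps $\theta_n:X_n\to Y_n$ such that (a) each $\tau_n$ is a homomorphism, (b) $\mathrm{d}_{\mathrm{H}}(\theta_n\circ\sigma_n(g),\tau_n(g)\circ\theta_n)\to0$ for every $g\in G$, and (c) $\mathrm{d}_{\mathrm{H}}(\theta_n\circ\sigma_n(g),\theta_n)\to1$ for every $g\in G\setminus\{e\}$. Induction: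 choose $s:\Gamma/\Gamma_0\to\Gamma$ with $s(e\Gamma_0)=e$ and $s(g\Gamma_0)\in g\Gamma_0$, let $c(g,h\Gamma_0)=s(gh\Gamma_0)^{-1}gs(h\Gamma_0)\in\Gamma_0$, and define $\mathrm{Ind}_{\Gamma_0}^{\Gamma}(\sigma_n)(g)(h\Gamma_0,x)=(gh\Gamma_0,\sigma_n(c(g,h\Gamma_0))x)$ for $g\in\Gamma$, $h\Gamma_0\in\Gamma/\Gamma_0$, $x\in X_n$; this is a sofic approximation of $\Gamma$. *)

From mathcomp Require Import all_boot all_order all_algebra all_fingroup.
Set Implicit Arguments. Unset Strict Implicit. Unset Printing Implicit Defensive.
Import Order.TTheory GRing.Theory Num.Theory.

Record Grp := {
  gcar :> Type;
  gmul : gcar -> gcar -> gcar;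
  gone : gcar;
  ginv : gcar -> gcar;
  gmulA : forall a b c, gmul a (gmul b c) = gmul (gmul a b) c;
  gmul1 : forall a, gmul gone a = a;
  gmulg1 : forall a, gmul a gone = a;
  gmulV : forall a, gmul (ginv a) a = gone;
  gmulgV : forall a, gmul a (ginv a) = gone;
  gcountable : exists f : gcar -> nat, injective f }.

Arguments gmul {G} : rename.
Arguments gone {G} : rename.
Arguments ginv {G} : rename.

Record subgroup (G : Grp) := {
  smem : pred G;
  smem1 : smem gone;
  smemM : forall a b, smem a -> smem b -> smem (gmul a b);
  smemV : forall a, smem a -> smem (ginv a) }.

Section SubGrp.
Variables (G : Grp) (H : subgroup G).
Let T := {x : G | smem H x}.
Definition sub_mul (a b : T) : T :=
  exist _ (gmul (val a) (val b)) (smemM (valP a) (valP b)).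
Definition sub_one : T := exist _ gone (smem1 H).
Definition sub_inv (a : T) : T := exist _ (ginv (val a)) (smemV (valP a)).
Lemma sub_mulA a b c : sub_mul a (sub_mul b c) = sub_mul (sub_mul a b) c.
Proof. by apply: val_inj; rewrite /= gmulA. Qed.
Lemma sub_mul1 a : sub_mul sub_one a = a.
Proof. by apply: val_inj; rewrite /= gmul1. Qed.
Lemma sub_mulg1 a : sub_mul a sub_one = a.
Proof. by apply: val_inj; rewrite /= gmulg1. Qed.
Lemma sub_mulV a : sub_mul (sub_inv a) a = sub_one.
Proof. by apply: val_inj; rewrite /= gmulV. Qed.
Lemma sub_mulgV a : sub_mul a (sub_inv a) = sub_one.
Proof. by apply: val_inj; rewrite /= gmulgV. Qed.
Lemma sub_countable : exists f : T -> nat, injective f.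
Proof.
have [f finj] := gcountable G.
by exists (fun a => f (val a)) => a b /finj /val_inj.
Qed.
Definition subGrp : Grp :=
  Build_Grp sub_mulA sub_mul1 sub_mulg1 sub_mulV sub_mulgV sub_countable.
End SubGrp.

Definition dH (X Y : finType) (a b : X -> Y) : rat :=
  (#|[set x | a x != b x]|%:R / #|X|%:R)%R.

Definition converges_to (u : nat -> rat) (l : rat) : Prop :=
  forall eps : rat, (0 < eps)%R ->
    exists N, forall n, (N <= n)%N -> (`|u n - l| < eps)%R.

Definition sofic_approx (G : Grp) (X : nat -> finType)
    (sigma : forall n, G -> {perm X n}) : Prop :=
  (forall g h : G,
     converges_to (fun n => dH (fun x => sigma n g (sigma n h x))
                               (sigma n (gmul g h))) 0) /\
  (forall g : G, g <> gone ->
     converges_to (fun n => dH (sigma n g) id) 1).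

Definition diamond (G : Grp) (X : nat -> finType)
    (sigma : forall n, G -> {perm X n}) : Prop :=
  exists (Y : nat -> finType) (tau : forall n, G -> {perm Y n})
         (theta : forall n, X n -> Y n),
    sofic_approx tau /\
    (forall n (g h : G) (y : Y n), tau n (gmul g h) y = tau n g (tau n h y)) /\
    (forall g : G,
       converges_to (fun n => dH (fun x => theta n (sigma n g x))
                                 (fun x => tau n g (theta n x))) 0) /\
    (forall g : G, g <> gone ->
       converges_to (fun n => dH (fun x => theta n (sigma n g x)) (theta n)) 1).

(** Finite-index data: a finite type I modelling Gamma/Gamma_0 with quotient map
    q (q a = q b iff a^{-1} b in Gamma_0, i.e. left cosets a Gamma_0) and a section
    s with s(e Gamma_0) = e. *)
Definition coset_data (G : Grp) (H : subgroup G) (I : finType)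
    (q : G -> I) (s : I -> G) : Prop :=
  (forall a b : G, q a = q b <-> smem H (gmul (ginv a) b)) /\
  (forall i, q (s i) = i) /\
  s (q gone) = gone.

Section Induction.
Variables (G : Grp) (H : subgroup G) (I : finType) (q : G -> I) (s : I -> G).
Hypothesis hqs : coset_data H q s.

Lemma ginv_uniq (x y : G) : gmul x y = gone -> ginv x = y.
Proof.
move=> e; rewrite -[ginv x]gmulg1 -e gmulA gmulV gmul1 //.
Qed.

Lemma ginv_mulK (g a b : G) : gmul (ginv (gmul g a)) (gmul g b) = gmul (ginv a) b.
Proof.
have -> : ginv (gmul g a) = gmul (ginv a) (ginv g).
  apply: ginv_uniq.
  by rewrite -gmulA [gmul a _]gmulA gmulgV gmul1 gmulgV.
by rewrite -gmulA [gmul (ginv g) _]gmulA gmulV gmul1.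
Qed.

Definition cocycle (g : G) (i : I) : subGrp H :=
  exist _ (gmul (ginv (s (q (gmul g (s i))))) (gmul g (s i)))
    (proj1 (proj1 hqs _ _) (proj1 (proj2 hqs) _)).

Variables (X : nat -> finType) (sigma : forall n, subGrp H -> {perm X n}).

Definition ind_fun (n : nat) (g : G) (p : I * X n) : I * X n :=
  (q (gmul g (s p.1)), sigma n (cocycle g p.1) p.2).

Lemma ind_fun_inj n g : injective (@ind_fun n g).
Proof.
move=> [i x] [j y] [/= eq1 eq2].
have eij : i = j.
  move/(proj1 (proj1 hqs _ _)): eq1; rewrite ginv_mulK.
  by move/(proj2 (proj1 hqs _ _)); rewrite !(proj1 (proj2 hqs)).
by subst j; rewrite (perm_inj eq2).
Qed.

Definition Ind n (g : G) : {perm (I * X n)} := perm (@ind_fun_inj n g).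
End Induction.

From mathcomp Require Import all_boot all_order all_algebra all_fingroup.
From mathcomp Require Import ring.
Set Implicit Arguments. Unset Strict Implicit. Unset Printing Implicit Defensive.
Import Order.TTheory GRing.Theory Num.Theory.
Local Open Scope ring_scope.

(* Restricted to Gamma_0, the induced action preserves the base coset
   {e Gamma_0} x X_n and acts there exactly as sigma_n, because c(g, e Gamma_0) = g
   for g in Gamma_0.  So restricting tau_n to Gamma_0 and theta_n to this slice
   witnesses (diamond) for sigma_n: the slice carries a 1/[Gamma : Gamma_0]
   fraction of the points, hence densities of disagreement and of agreement on it
   are at most [Gamma : Gamma_0] times those on Gamma/Gamma_0 x X_n. *)

Lemma converges_to0_le (u v : nat -> rat) (c : rat) : 0 < c ->
  (forall n, 0 <= v n <= c * u n) -> converges_to u 0 -> converges_to v 0.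
Proof.
move=> c_gt0 v_bound cvg_u eps eps_gt0.
have [N HN] := cvg_u (eps / c) (divr_gt0 eps_gt0 c_gt0).
exists N => n /HN; rewrite !subr0 => u_small.
have /andP[v_ge0 v_le] := v_bound n.
rewrite ger0_norm //; apply: le_lt_trans v_le _.
by rewrite mulrC -ltr_pdivlMr //; apply: le_lt_trans u_small; apply: ler_norm.
Qed.

Lemma converges_to1_subr (u : nat -> rat) :
  converges_to u 1 <-> converges_to (fun n => 1 - u n) 0.
Proof.
by split=> cvg eps /cvg[N HN]; exists N => n /HN; rewrite subr0 distrC.
Qed.

Section HammingDistance.

Variables (X Y : finType).
Implicit Types a b : X -> Y.

Lemma eq_dH a a' b b' : a =1 a' -> b =1 b' -> dH a b = dH a' b'.
Proof.
move=> aa' bb'; rewrite /dH; congr (_%:R / _).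
by apply: eq_card => x; rewrite !inE aa' bb'.
Qed.

Lemma dH_ge0 a b : 0 <= dH a b.
Proof. by rewrite /dH divr_ge0 ?ler0n. Qed.

Lemma dH_le1 a b : dH a b <= 1.
Proof.
rewrite /dH; have [->|X_gt0] := posnP #|X|; first by rewrite invr0 mulr0 ler01.
by rewrite ler_pdivrMr ?ltr0n // mul1r ler_nat max_card.
Qed.

Lemma subr1_dH a b : (0 < #|X|)%N ->
  1 - dH a b = #|[set x | a x == b x]|%:R / #|X|%:R.
Proof.
move=> X_gt0; rewrite /dH; set E := [set x | a x == b x].
have -> : [set x | a x != b x] = ~: E by apply/setP=> x; rewrite !inE.
have : #|X|%:R != 0 :> rat by rewrite pnatr_eq0 -lt0n.
by rewrite -(cardsC E) natrD => ?; field.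
Qed.

End HammingDistance.

Section Slices.

Variables (I X : finType) (i0 : I).

Definition slice (Y : Type) (f : I * X -> Y) : X -> Y := fun x => f (i0, x).

Lemma card_slice_le (P : pred (I * X)) :
  (#|[set x | P (i0, x)]| <= #|[set p | P p]|)%N.
Proof.
have pair_inj : injective (fun x : X => (i0, x)) by move=> x y [].
rewrite -(card_imset _ pair_inj); apply: subset_leq_card.
by apply/subsetP=> y /imsetP[x]; rewrite !inE => Px ->.
Qed.

Lemma card_slice_ratio_le (P : pred (I * X)) :
  #|[set x | P (i0, x)]|%:R / #|X|%:R
    <= #|I|%:R * (#|[set p | P p]|%:R / #|{: I * X}|%:R) :> rat.
Proof.
have [->|X_gt0] := posnP #|X|.
  by rewrite invr0 mulr0 mulr_ge0 ?divr_ge0 ?ler0n.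
have I_neq0 : #|I|%:R != 0 :> rat by rewrite pnatr_eq0 -lt0n; apply/card_gt0P; exists i0.
have X_neq0 : #|X|%:R != 0 :> rat by rewrite pnatr_eq0 -lt0n.
set D := #|[set p | P p]|.
have -> : #|I|%:R * (D%:R / #|{: I * X}|%:R) = D%:R / #|X|%:R :> rat.
  by rewrite card_prod natrM; field; apply/andP.
by rewrite ler_pM2r ?invr_gt0 ?ltr0n // ler_nat card_slice_le.
Qed.

Variable Y : finType.
Implicit Types a b : I * X -> Y.

Lemma dH_slice_le a b : dH (slice a) (slice b) <= #|I|%:R * dH a b.
Proof. exact: (card_slice_ratio_le (fun p => a p != b p)). Qed.

Lemma subr1_dH_slice_le a b :
  1 - dH (slice a) (slice b) <= #|I|%:R * (1 - dH a b).
Proof.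
have [X0|X_gt0] := posnP #|X|.
  rewrite /dH card_prod X0 muln0 !invr0 !mulr0 !subr0 mulr1 ler1n.
  by apply/card_gt0P; exists i0.
have IX_gt0 : (0 < #|{: I * X}|)%N.
  by rewrite card_prod muln_gt0 X_gt0 andbT; apply/card_gt0P; exists i0.
rewrite !subr1_dH //.
exact: (card_slice_ratio_le (fun p => a p == b p)).
Qed.

End Slices.

Lemma sofic_approx_sub (G : Grp) (H : subgroup G) (Y : nat -> finType)
    (tau : forall n, G -> {perm Y n}) :
  sofic_approx tau -> sofic_approx (fun n (g : subGrp H) => tau n (val g)).
Proof.
move=> [tau_mul tau_free]; split=> [g h|g g_neq1]; first exact: tau_mul.
by apply: tau_free => g1; apply/g_neq1/val_inj.
Qed.

Lemma diamond_slice (G : Grp) (H : subgroup G) (I : finType) (i0 : I)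
    (X : nat -> finType) (rho : forall n, G -> {perm I * X n})
    (sigma : forall n, subGrp H -> {perm X n}) :
  (forall n (g : subGrp H) x, rho n (val g) (i0, x) = (i0, sigma n g x)) ->
  diamond rho -> diamond sigma.
Proof.
move=> rho_slice [Y [tau [theta [tau_sofic [tau_hom [theta_equiv theta_free]]]]]].
have I_gt0 : 0 < #|I|%:R :> rat by rewrite ltr0n; apply/card_gt0P; exists i0.
have dH_sigma_slice n (g : subGrp H) (b : X n -> Y n) :
    dH (fun x => theta n (i0, sigma n g x)) b
    = dH (slice i0 (fun p => theta n (rho n (val g) p))) b.
  by apply: eq_dH => // x; rewrite /slice rho_slice.
exists Y, (fun n g => tau n (val g)), (fun n => slice i0 (theta n)).
split; first exact: sofic_approx_sub tau_sofic.
split; first by move=> n g h; apply: tau_hom.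
split=> [g|g g_neq1].
  apply: converges_to0_le I_gt0 _ (theta_equiv (val g)) => n.
  by rewrite dH_sigma_slice dH_ge0 dH_slice_le.
have val_neq1 : val g <> gone by move=> g1; apply/g_neq1/val_inj.
apply/converges_to1_subr; move/converges_to1_subr: (theta_free _ val_neq1).
apply: converges_to0_le I_gt0 _ => n.
by rewrite dH_sigma_slice subr_ge0 dH_le1 subr1_dH_slice_le.
Qed.

Lemma ginv1 (G : Grp) : ginv (gone : G) = gone.
Proof. by apply: ginv_uniq; rewrite gmul1. Qed.

Section InducedBaseCoset.

Variables (G : Grp) (H : subgroup G) (I : finType) (q : G -> I) (s : I -> G).
Hypothesis hqs : coset_data H q s.

Lemma coset_base (g : subGrp H) : q (val g) = q gone.
Proof. by apply/esym/(proj1 hqs); rewrite ginv1 gmul1; apply: valP. Qed.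

Lemma cocycle_base (g : subGrp H) : cocycle hqs (val g) (q gone) = g.
Proof.
have [_ [_ s_base]] := hqs.
by apply: val_inj; rewrite /= s_base gmulg1 coset_base s_base ginv1 gmul1.
Qed.

Lemma Ind_base (X : nat -> finType) (sigma : forall n, subGrp H -> {perm X n})
    n (g : subGrp H) (x : X n) :
  Ind hqs sigma n (val g) (q gone, x) = (q gone, sigma n g x).
Proof.
have [_ [_ s_base]] := hqs.
by rewrite /Ind permE /ind_fun /= cocycle_base s_base gmulg1 coset_base.
Qed.

End InducedBaseCoset.

Theorem lemma4p4 (Gamma : Grp) (Gamma0 : subgroup Gamma)
    (I : finType) (q : Gamma -> I) (s : I -> Gamma)
    (hqs : coset_data Gamma0 q s)
    (X : nat -> finType) (sigma : forall n, subGrp Gamma0 -> {perm X n}) :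
  sofic_approx sigma ->
  diamond (Ind hqs sigma) ->
  diamond sigma.
Proof. by move=> _; apply: diamond_slice; apply: Ind_base. Qed.
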